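(* Let $a, b, b'$ be complex numbers and $A>0$ such that $|b' - b| \le 1$ and $|a| e^{|b|} \le A$. Then $$\| Y(b) X(a) Y(-b) - Y(b') X(a) Y(-b') \| \le 10\, e^{A} |a|\, e^{|b|}\, |b' - b|.$$
   Context: For $U \in \mathfrak{sl}_2(\mathbb{C})$ and $t\in\mathbb{C}$, $U(t) = \exp(tU)$. $X = \begin{pmatrix} 1/2 & 0 \\ 0 & -1/2 \end{pmatrix}$, $\theta = \begin{pmatrix} 0 & -1/2 \\ 1/2 & 0\end{pmatrix}$, $Y = \exp(\tfrac{\pi}{2}\theta) X \exp(-\tfrac{\pi}{2}\theta)$. $\|\cdot\|$ is the operator norm on $M_2(\mathbb{C})$ with respect to the standard Hermitian norm. *)

From HB Require Import structures.
From mathcomp Require Import all_boot all_order all_algebra.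
From mathcomp Require Import all_classical all_reals all_analysis.
From mathcomp Require Import complex.
Set Implicit Arguments. Unset Strict Implicit. Unset Printing Implicit Defensive.
Import Order.TTheory GRing.Theory Num.Theory.
Import numFieldNormedType.Exports.
Local Open Scope ring_scope.
Local Open Scope classical_set_scope.

Section Defs.
Variable R : realType.
Local Notation C := R[i].

Definition cabs (z : C) : R := ComplexField.Normc.normc z.

Definition mexp (M : 'M[C]_2) : 'M[C]_2 :=
  limn (series (fun k : nat => (k`!%:R)^-1 *: M ^+ k)).

Definition oneparam (U : 'M[C]_2) (t : C) : 'M[C]_2 := mexp (t *: U).

Definition hnorm (v : 'cV[C]_2) : R := Num.sqrt (\sum_i cabs (v i 0) ^+ 2).

Definition opnorm (M : 'M[C]_2) : R :=
  sup [set hnorm (M *m v) | v in [set v : 'cV[C]_2 | hnorm v = 1]].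

Definition Xm : 'M[C]_2 :=
  \matrix_(i < 2, j < 2)
    (if i == j then (if i == 0 then 2%:R^-1 else - 2%:R^-1) else 0).

Definition thetam : 'M[C]_2 :=
  \matrix_(i < 2, j < 2)
    (if i == j then 0 else (if i == 0 then - 2%:R^-1 else 2%:R^-1)).

Definition Ym : 'M[C]_2 :=
  mexp ((((pi : R) / 2)%:C)%C *: thetam) *m Xm *m mexp (((- ((pi : R) / 2))%:C)%C *: thetam).

End Defs.

From HB Require Import structures.
From mathcomp Require Import all_boot all_order all_algebra.
From mathcomp Require Import all_classical all_reals all_analysis.
From mathcomp Require Import complex.
From mathcomp Require Import ring lra.
Set Implicit Arguments. Unset Strict Implicit. Unset Printing Implicit Defensive.
Import Order.TTheory GRing.Theory Num.Theory.
Import numFieldNormedType.Exports.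
Local Open Scope ring_scope.
Local Open Scope classical_set_scope.
Local Open Scope complex_scope.

(* X = J/2 and Y = K/2, where J = diag(1, -1) and K swaps the two coordinates
   (exp(pi/2 theta) is the rotation by pi/4).  As J^2 = K^2 = 1, exp(tJ) = cosh t + sinh t J,
   and conjugating by Y(b) = cosh(b/2) + sinh(b/2) K gives, with T = KJ,
     Y(b) X(a) Y(-b) = cosh(a/2) + sinh(a/2) (cosh b J + sinh b T).
   The difference in the statement is thus sinh(a/2) ((cosh b - cosh b') J + (sinh b - sinh b') T),
   of operator norm at most |sinh(a/2)| (|cosh b - cosh b'| + |sinh b - sinh b'|).  We conclude
   with |sinh u| <= |u| e^|u| and |e^b - e^b'| <= e^|b| (e^|b'-b| - 1) <= 4 e^|b| |b' - b|.
   The complex exponential is e^x (cos y + i sin y); it is the sum of the exponential series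
   because the Cauchy-product defect of the truncated series of e^x and e^(iy) is dominated
   by its real counterpart, which tends to 0 since e^s e^t = e^(s+t). *)

Section ExpPartialSums.
Variable F : numFieldType.
Implicit Types a b : F.

Definition exp_partial n a : F := \sum_(k < n) a ^+ k / k`!%:R.

Definition exp_cauchy_defect n a b : F :=
  \sum_(0 <= i < n) \sum_(n - i <= j < n) a ^+ i / i`!%:R * (b ^+ j / j`!%:R).

Lemma natr_fact_neq0 n : (n`!%:R : F) != 0.
Proof. by rewrite pnatr_eq0 -lt0n fact_gt0. Qed.

Lemma exp_binomial_term a b n :
  (a + b) ^+ n / n`!%:R =
  \sum_(0 <= i < n.+1) a ^+ i / i`!%:R * (b ^+ (n - i) / (n - i)`!%:R).
Proof.
rewrite addrC exprDn big_mkord mulr_suml; apply: eq_bigr => i _.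
have /(congr1 (fun m => m%:R : F)) := bin_fact (leq_ord i); rewrite !natrM => e.
rewrite -mulr_natr; apply: (mulIf (natr_fact_neq0 n)); rewrite -e.
by field; rewrite !natr_fact_neq0 pnatr_eq0 -lt0n bin_gt0 leq_ord.
Qed.

Lemma exp_partialD n a b :
  exp_partial n (a + b) =
  \sum_(0 <= i < n) \sum_(0 <= j < n - i) a ^+ i / i`!%:R * (b ^+ j / j`!%:R).
Proof.
elim: n => [|n IH]; first by rewrite /exp_partial !big_ord0 big_geq.
rewrite /exp_partial big_ord_recr /= -/(exp_partial n (a + b)) IH exp_binomial_term.
rewrite [RHS]big_nat_recr //= subSnn big_nat1 big_nat_recr //= subnn addrA.
congr (_ + _); rewrite -big_split /=; apply: eq_big_nat => i /andP[_ ltin].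
by rewrite subSn ?(ltnW ltin) // big_nat_recr.
Qed.

Lemma exp_partial_mulB n a b :
  exp_partial n a * exp_partial n b - exp_partial n (a + b) = exp_cauchy_defect n a b.
Proof.
rewrite exp_partialD /exp_partial /exp_cauchy_defect mulr_suml big_mkord.
rewrite (eq_bigr (fun i : 'I_n => \sum_(0 <= j < n - i) a ^+ i / i`!%:R * (b ^+ j / j`!%:R)
    + \sum_(n - i <= j < n) a ^+ i / i`!%:R * (b ^+ j / j`!%:R))).
  by rewrite big_split /= [RHS]big_mkord addrAC subrr add0r.
move=> i _; rewrite -big_cat_nat ?leq_subr // mulr_sumr big_mkord.
by apply: eq_bigr.
Qed.

Lemma norm_exp_cauchy_defect n a b :
  `|exp_cauchy_defect n a b| <= exp_cauchy_defect n `|a| `|b|.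
Proof.
apply: le_trans (ler_norm_sum _ _ _) _; apply: ler_sum => i _.
apply: le_trans (ler_norm_sum _ _ _) _; apply: ler_sum => j _.
by rewrite !normrM !normfV !normr_nat !normrX.
Qed.

Lemma norm_exp_partialB1 n a : `|exp_partial n.+1 a - 1| <= exp_partial n.+1 `|a| - 1.
Proof.
rewrite /exp_partial !big_ord_recl /= !expr0 fact0 divr1 ![1 + _]addrC !addrK.
apply: le_trans (ler_norm_sum _ _ _) _; apply: ler_sum => i _.
by rewrite normrM normfV normr_nat normrX.
Qed.

End ExpPartialSums.

Section ExpPartialSumsMorph.
Variables (F G : numFieldType) (f : {rmorphism F -> G}).

Lemma rmorph_exp_partial n a : f (exp_partial n a) = exp_partial n (f a).
Proof.
rewrite rmorph_sum; apply: eq_bigr => k _.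
by rewrite rmorphM rmorphXn fmorphV rmorph_nat.
Qed.

Lemma rmorph_exp_cauchy_defect n a b :
  f (exp_cauchy_defect n a b) = exp_cauchy_defect n (f a) (f b).
Proof.
rewrite rmorph_sum; apply: eq_bigr => i _; rewrite rmorph_sum; apply: eq_bigr => j _.
by rewrite !rmorphM !rmorphXn !fmorphV !rmorph_nat.
Qed.

End ExpPartialSumsMorph.

Section RealExp.
Variable R : realType.
Implicit Types x : R.

Lemma cvg_exp_partial x : (fun n => exp_partial n x) @ \oo --> expR x.
Proof.
have -> : (fun n => exp_partial n x) = series (exp_coeff x).
  by apply/funext => n; rewrite /series /= big_mkord.
exact: is_cvg_series_exp_coeff.
Qed.

Lemma cvg_exp_cauchy_defect (s t : R) : (fun n => exp_cauchy_defect n s t) @ \oo --> 0.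
Proof.
rewrite (funext (fun n => esym (exp_partial_mulB n s t))).
rewrite -(subrr (expR (s + t))) [X in _ --> X - _]expRD.
by apply: cvgB; [apply: cvgM|]; exact: cvg_exp_partial.
Qed.

Lemma expR_sub1_le x : expR x - 1 <= x * expR x.
Proof.
have := expR_ge1Dx (- x); have := expRxMexpNx_1 x; have := expR_ge0 x; nra.
Qed.

Lemma expR1_le4 : expR (1 : R) <= 4%:R.
Proof.
have half_le2 : expR (2^-1 : R) <= 2%:R.
  have := expR_ge1Dx (- 2^-1 : R); have := expRxMexpNx_1 (2^-1 : R).
  have := expR_ge0 (2^-1 : R); nra.
have -> : expR (1 : R) = expR 2^-1 * expR 2^-1 by rewrite -expRD -div1r -splitr.
by have := expR_ge0 (2^-1 : R); nra.
Qed.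

Lemma expR_sub1_le4 x : 0 <= x <= 1 -> expR x - 1 <= 4%:R * x.
Proof.
move=> /andP[x_ge0 x_le1].
have : expR x <= 4%:R by apply: le_trans expR1_le4; rewrite ler_expR.
have := expR_sub1_le x; nra.
Qed.

End RealExp.

Section ComplexModulus.
Variable R : realType.
(* The normed-space topology of [R[i]] is only found through its [numFieldType] structure. *)
Local Notation C := (Num.NumField.sort (R[i] : numFieldType)).
Implicit Types z w : C.

Lemma normcE z : `|z| = (cabs z)%:C.
Proof. by []. Qed.

Lemma cabs_ge0 z : 0 <= cabs z.
Proof. by case: z => ? ?; rewrite /cabs /ComplexField.Normc.normc sqrtr_ge0. Qed.

Lemma cabsM z w : cabs (z * w) = cabs z * cabs w.
Proof. exact: ComplexField.Normc.normcM. Qed.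

Lemma cabsN z : cabs (- z) = cabs z.
Proof. exact: normcN. Qed.

Lemma cabsD_le z w : cabs (z + w) <= cabs z + cabs w.
Proof. exact: le_normcD. Qed.

Lemma cabsB_le z w : cabs (z - w) <= cabs z + cabs w.
Proof. by rewrite -(cabsN w) cabsD_le. Qed.

Lemma cabs_real (x : R) : cabs x%:C = `|x|.
Proof. by rewrite /cabs /ComplexField.Normc.normc /= expr0n addr0 sqrtr_sqr. Qed.

Lemma cabs_i : cabs ('i : C) = 1.
Proof. by rewrite /cabs /ComplexField.Normc.normc /= expr0n add0r expr1n sqrtr1. Qed.

Lemma cabs_half z : cabs (z / 2) = cabs z / 2.
Proof.
by rewrite cabsM /cabs ComplexField.Normc.normcV normcMn ComplexField.Normc.normc1.
Qed.

Lemma Re_le_cabs z : complex.Re z <= cabs z.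
Proof.
apply: le_trans (ler_norm _) _; case: z => x y.
rewrite /cabs /ComplexField.Normc.normc /= -sqrtr_sqr ler_sqrt ?lerDl ?sqr_ge0 //.
by rewrite addr_ge0 ?sqr_ge0.
Qed.

Lemma cvg_real_complex (u : nat -> R) (l : R) :
  u @ \oo --> l -> (fun n => (u n)%:C : C) @ \oo --> (l%:C : C).
Proof.
move=> /cvgrPdist_lt ul; apply/cvgrPdist_lt => e e0.
move: (e0); rewrite ltcE /= => /andP[/eqP Ime Ree].
apply: filterS (ul _ Ree) => n ltn.
by rewrite -rmorphB normcE cabs_real ltcE /= Ime eqxx.
Qed.

Lemma cvg_cabs (f : nat -> C) (l : C) :
  f @ \oo --> l -> (fun n => cabs (f n)) @ \oo --> cabs l.
Proof.
move=> /cvgrPdist_lt fl; apply/cvgrPdist_lt => e e0.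
have : (0 : C) < e%:C by rewrite ltcR.
move=> /fl; apply: filterS => n; rewrite normcE ltcR; apply: le_lt_trans.
have := cabsD_le (f n - l) l; have := cabsD_le (l - f n) (f n).
rewrite !subrK => h1 h2; have : cabs (l - f n) = cabs (f n - l) by rewrite -cabsN opprB.
by rewrite ler_norml; lra.
Qed.

Lemma cvg_complex_dominated0 (f : nat -> C) (g : nat -> R) :
  (forall n, cabs (f n) <= g n) -> g @ \oo --> 0 -> f @ \oo --> 0.
Proof.
move=> fg /cvgrPdist_lt g0; apply/cvgrPdist_lt => e e0.
move: (e0); rewrite ltcE /= => /andP[/eqP Ime Ree].
apply: filterS (g0 _ Ree) => n; rewrite !sub0r !normrN normcE ltcE /= Ime eqxx /=.
by apply: le_lt_trans; apply: le_trans (fg n) (ler_norm _).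
Qed.

End ComplexModulus.

Section ComplexExp.
Variable R : realType.
Local Notation C := (Num.NumField.sort (R[i] : numFieldType)).
Implicit Types z w : C.

Definition expC z : C :=
  (expR (complex.Re z) * cos (complex.Im z)) +i* (expR (complex.Re z) * sin (complex.Im z)).

Lemma complexE_real (x y : R) : x +i* y = x%:C + 'i * y%:C :> C.
Proof. by apply/eqP; rewrite eq_complex /=; apply/andP; split; apply/eqP; ring. Qed.

Lemma exp_coeff_imag (y : R) k :
  ('i * y%:C) ^+ k / k`!%:R = (cos_coeff y k)%:C + 'i * (sin_coeff y k)%:C :> C.
Proof.
have := odd_double_half k; case: (odd k) => /= <-; rewrite ?add1n ?add0n.
- rewrite cos_coeff_odd /sin_coeff /= odd_double doubleK /=.
  rewrite !rmorphM /= fmorphV /= !rmorphXn /= rmorphN rmorph1 !rmorph_nat.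
  rewrite exprMn exprS -mul2n exprM sqr_i mul2n; ring.
- rewrite sin_coeff_even /cos_coeff /= odd_double doubleK /=.
  rewrite !rmorphM /= fmorphV /= !rmorphXn /= rmorphN rmorph1 !rmorph_nat.
  rewrite exprMn -mul2n exprM sqr_i mul2n; ring.
Qed.

Lemma cvg_exp_partial_imag (y : R) :
  (fun n => exp_partial n ('i * y%:C : C)) @ \oo --> ((cos y)%:C + 'i * (sin y)%:C : C).
Proof.
have -> : (fun n => exp_partial n ('i * y%:C : C)) =
    (fun n => (series (cos_coeff y) n)%:C + 'i * (series (sin_coeff y) n)%:C).
  apply/funext => n; rewrite /exp_partial /series /= !big_mkord !rmorph_sum mulr_sumr.
  by rewrite -big_split; apply: eq_bigr => k _; rewrite exp_coeff_imag.
apply: cvgD; last apply: cvgMr; apply: cvg_real_complex.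
- rewrite (_ : cos y = limn (series (cos_coeff y))); last by rewrite unlock.
  exact: is_cvg_series_cos_coeff.
- rewrite (_ : sin y = limn (series (sin_coeff y))); last by rewrite unlock.
  exact: is_cvg_series_sin_coeff.
Qed.

Lemma cvg_exp_partial_expC z : (fun n => exp_partial n z) @ \oo --> expC z.
Proof.
set x := complex.Re z; set y := complex.Im z.
have ez : z = x%:C + 'i * y%:C by rewrite /x /y; exact: complexE.
have -> : (fun n => exp_partial n z) = (fun n => exp_partial n (x%:C : C) *
    exp_partial n ('i * y%:C : C) - exp_cauchy_defect n (x%:C : C) ('i * y%:C)).
  by apply/funext => n; rewrite -exp_partial_mulB -ez opprB addrC subrK.
have -> : expC z = (expR x)%:C * ((cos y)%:C + 'i * (sin y)%:C) - 0.
  rewrite subr0 /expC -/x -/y.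
  by apply/eqP; rewrite eq_complex /=; apply/andP; split; apply/eqP; ring.
apply: cvgB; first apply: cvgM; last first.
- apply: (@cvg_complex_dominated0 _ _ (fun n => exp_cauchy_defect n `|x| `|y|));
    last exact: cvg_exp_cauchy_defect.
  move=> n; have := norm_exp_cauchy_defect n (x%:C : C) ('i * y%:C).
  rewrite !normcE cabsM cabs_i mul1r !cabs_real -rmorph_exp_cauchy_defect.
  by rewrite lecR.
- exact: cvg_exp_partial_imag.
rewrite -(funext (fun n => rmorph_exp_partial (real_complex R) n x)).
exact/cvg_real_complex/cvg_exp_partial.
Qed.

Lemma expCD z w : expC (z + w) = expC z * expC w.
Proof.
case: z => x1 y1; case: w => x2 y2; rewrite /expC /= expRD cosD sinD.
by apply/eqP; rewrite eq_complex /=; apply/andP; split; apply/eqP; ring.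
Qed.

Lemma expC0 : expC 0 = 1.
Proof. by rewrite /expC /= expR0 cos0 sin0 mulr1 mulr0. Qed.

Lemma expC_imag (y : R) : expC ('i * y%:C) = (cos y)%:C + 'i * (sin y)%:C.
Proof.
by rewrite /expC /= !(mul0r, mul1r, subr0, add0r, addr0, oppr0, expR0) complexE_real.
Qed.

Lemma cabs_expC z : cabs (expC z) = expR (complex.Re z).
Proof.
rewrite /cabs /ComplexField.Normc.normc /expC /= !exprMn -mulrDr cos2Dsin2 mulr1.
by rewrite sqrtr_sqr ger0_norm ?expR_ge0.
Qed.

Lemma cabs_expC_le z : cabs (expC z) <= expR (cabs z).
Proof. by rewrite cabs_expC ler_expR Re_le_cabs. Qed.

Lemma cabs_expCB1 z : cabs (expC z - 1) <= expR (cabs z) - 1.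
Proof.
have lim_z : (fun n => exp_partial n z - 1) @ \oo --> expC z - 1.
  exact: (cvgB (@cvg_exp_partial_expC z) (cvg_cst (1 : C))).
have lim_cabs_z : (fun n => exp_partial n (cabs z) - 1) @ \oo --> expR (cabs z) - 1.
  exact: (cvgB (@cvg_exp_partial R (cabs z)) (cvg_cst (1 : R))).
apply: (ler_cvg_to (cvg_cabs lim_z) lim_cabs_z); exists 1%N => // -[|n] //= _.
have := norm_exp_partialB1 n z.
rewrite normcE -rmorph_exp_partial -(rmorph1 (real_complex R)) -rmorphB.
by rewrite lecR.
Qed.

End ComplexExp.

Section ComplexHyperbolic.
Variable R : realType.
Local Notation C := (Num.NumField.sort (R[i] : numFieldType)).
Implicit Types u b : C.

Definition coshC u : C := (expC u + expC (- u)) / 2.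
Definition sinhC u : C := (expC u - expC (- u)) / 2.

Lemma coshCN u : coshC (- u) = coshC u.
Proof. by rewrite /coshC opprK addrC. Qed.

Lemma sinhCN u : sinhC (- u) = - sinhC u.
Proof. by rewrite /sinhC opprK -mulNr opprB. Qed.

Lemma coshC_imag (y : R) : coshC ('i * y%:C) = (cos y)%:C.
Proof.
by rewrite /coshC -mulrN -rmorphN !expC_imag cosN sinN rmorphN; field.
Qed.

Lemma sinhC_imag (y : R) : sinhC ('i * y%:C) = 'i * (sin y)%:C.
Proof.
by rewrite /sinhC -mulrN -rmorphN !expC_imag cosN sinN rmorphN; field.
Qed.

Lemma expC_mulN u : expC u * expC (- u) = 1.
Proof. by rewrite -expCD subrr expC0. Qed.

Lemma coshC2_sub_sinhC2 u : coshC u ^+ 2 - sinhC u ^+ 2 = 1.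
Proof.
by rewrite /coshC /sinhC -[RHS](expC_mulN u); field.
Qed.

Lemma coshC_double u : coshC u ^+ 2 + sinhC u ^+ 2 = coshC (u + u).
Proof.
by rewrite /coshC /sinhC opprD !expCD; field.
Qed.

Lemma sinhC_double u : 2%:R * coshC u * sinhC u = sinhC (u + u).
Proof.
by rewrite /coshC /sinhC opprD !expCD; field.
Qed.

Lemma cabs_sinhC_le u : cabs (sinhC u) <= cabs u * expR (cabs u).
Proof.
rewrite /sinhC cabs_half.
have -> : expC u - expC (- u) = (expC u - 1) - (expC (- u) - 1).
  by rewrite opprB addrA subrK.
have := cabsB_le (expC u - 1) (expC (- u) - 1).
have := cabs_expCB1 u; have := cabs_expCB1 (- u); rewrite cabsN.
have := expR_sub1_le (cabs u); lra.
Qed.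

Lemma cabs_expCB b (b' : C) :
  cabs (expC b - expC b') <= expR (cabs b) * (expR (cabs (b' - b)) - 1).
Proof.
have -> : expC b - expC b' = expC b * - (expC (b' - b) - 1).
  by rewrite mulrN mulrBr mulr1 -expCD [b + _]addrC subrK opprB.
by rewrite cabsM cabsN ler_pM ?cabs_ge0 ?cabs_expC_le ?cabs_expCB1.
Qed.

Lemma cabs_coshCB_sinhCB b (b' : C) :
  cabs (coshC b - coshC b') <= expR (cabs b) * (expR (cabs (b' - b)) - 1) /\
  cabs (sinhC b - sinhC b') <= expR (cabs b) * (expR (cabs (b' - b)) - 1).
Proof.
have hB := cabs_expCB b b'; have hBN := cabs_expCB (- b) (- b').
rewrite cabsN (_ : - b' - - b = - (b' - b)) ?cabsN in hBN; last by rewrite opprB opprK addrC.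
have := cabsD_le (expC b - expC b') (expC (- b) - expC (- b')).
have := cabsB_le (expC b - expC b') (expC (- b) - expC (- b')).
have -> : coshC b - coshC b' = ((expC b - expC b') + (expC (- b) - expC (- b'))) / 2.
  by rewrite /coshC; field.
have -> : sinhC b - sinhC b' = ((expC b - expC b') - (expC (- b) - expC (- b'))) / 2.
  by rewrite /sinhC; field.
rewrite !cabs_half; split; lra.
Qed.

End ComplexHyperbolic.

Section TwoByTwo.
Variable R : realType.
Local Notation C := (Num.NumField.sort (R[i] : numFieldType)).
Local Notation MC := 'M[R[i]]_2.

Local Ltac mx2_ext := apply/matrixP => -[[|[|?]] ?] -[[|[|?]] ?] //;
  rewrite ?(mxE, big_ord_recl, big_ord0) //=.

Definition mx22 (a b c d : C) : MC :=
  \matrix_(i < 2, j < 2)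
    if i == 0 then (if j == 0 then a else b) else (if j == 0 then c else d).

Lemma mx22_mul (a b c d a' b' c' d' : C) :
  mx22 a b c d *m mx22 a' b' c' d' =
  mx22 (a * a' + b * c') (a * b' + b * d') (c * a' + d * c') (c * b' + d * d').
Proof. by mx2_ext; rewrite addr0. Qed.

Lemma mx22_add (a b c d a' b' c' d' : C) :
  mx22 a b c d + mx22 a' b' c' d' = mx22 (a + a') (b + b') (c + c') (d + d').
Proof. by mx2_ext. Qed.

Lemma mx22_opp (a b c d : C) : - mx22 a b c d = mx22 (- a) (- b) (- c) (- d).
Proof. by mx2_ext. Qed.

Lemma mx22_scale (k a b c d : C) : k *: mx22 a b c d = mx22 (k * a) (k * b) (k * c) (k * d).
Proof. by mx2_ext. Qed.

Lemma mx22_1 : (1 : MC) = mx22 1 0 0 1.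
Proof. by mx2_ext. Qed.

Definition Jm : MC := mx22 1 0 0 (-1).
Definition Km : MC := mx22 0 1 1 0.
Definition Tm : MC := mx22 0 (-1) 1 0.

Lemma Xm_Jm : Xm R = 2^-1 *: Jm.
Proof. by mx2_ext; rewrite ?mulr1 ?mulr0 ?mulrN1. Qed.

Lemma thetam_Tm : thetam R = 2^-1 *: Tm.
Proof. by mx2_ext; rewrite ?mulr1 ?mulr0 ?mulrN1. Qed.

End TwoByTwo.

Ltac mx22_ring := rewrite /Jm /Km /Tm ?mx22_1 ?(mx22_scale, mx22_opp, mx22_add, mx22_mul);
  congr mx22; ring.

Section InvolutionExp.
Variable R : realType.
Local Notation C := (Num.NumField.sort (R[i] : numFieldType)).
Local Notation MC := 'M[R[i]]_2.
Variable M : MC.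
Hypothesis MM : M * M = 1.

Lemma involution_exp_term (mu : C) k :
  (k`!%:R)^-1 *: (mu *: M) ^+ k =
  ((mu ^+ k / k`!%:R + (- mu) ^+ k / k`!%:R) / 2) *: 1 +
  ((mu ^+ k / k`!%:R - (- mu) ^+ k / k`!%:R) / 2) *: M.
Proof.
have sqrM m : M ^+ m.*2 = 1 by rewrite -mul2n exprM expr2 MM expr1n.
have sqrN1 m : (-1 : C) ^+ m.*2 = 1 by rewrite -mul2n exprM sqrrN !expr1n.
rewrite exprZn scalerA exprNn; have := odd_double_half k.
case: (odd k) => /= <-; rewrite ?add1n ?add0n ?exprS sqrM sqrN1 ?mulr1.
- have -> : (mu * mu ^+ k./2.*2 / (k./2.*2.+1)`!%:R +
    -1 * (mu * mu ^+ k./2.*2) / (k./2.*2.+1)`!%:R) / 2 = 0 by ring.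
  by rewrite scale0r add0r; congr (_ *: _); field; rewrite natr_fact_neq0.
- have -> : (mu ^+ k./2.*2 / (k./2.*2)`!%:R - 1 * mu ^+ k./2.*2 / (k./2.*2)`!%:R) / 2 = 0
    by ring.
  by rewrite scale0r addr0; congr (_ *: _); field; rewrite natr_fact_neq0.
Qed.

Lemma mexp_involution (mu : C) : mexp (mu *: M) = coshC mu *: 1 + sinhC mu *: M.
Proof.
rewrite /mexp; have -> : series (fun k => (k`!%:R)^-1 *: (mu *: M) ^+ k) =
    (fun n => ((exp_partial n mu + exp_partial n (- mu)) / 2) *: (1 : MC) +
              ((exp_partial n mu - exp_partial n (- mu)) / 2) *: M).
  apply/funext => n; rewrite /series /= big_mkord.
  under eq_bigr do rewrite involution_exp_term.
  by rewrite big_split /= -!scaler_suml /exp_partial big_split sumrB.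
apply: (@cvg_lim _ (@norm_hausdorff _ _)).
by apply: cvgD; apply: cvgZ; try exact: cvg_cst; apply: cvgM; try exact: cvg_cst;
  [apply: cvgD | apply: cvgB]; exact: cvg_exp_partial_expC.
Qed.

End InvolutionExp.

Section OneParameterSubgroups.
Variable R : realType.
Local Notation C := (Num.NumField.sort (R[i] : numFieldType)).

Lemma Jm_sqr : Jm R * Jm R = 1.
Proof. by rewrite -mulmxE; mx22_ring. Qed.

Lemma Km_sqr : Km R * Km R = 1.
Proof. by rewrite -mulmxE; mx22_ring. Qed.

Lemma iTm_sqr : (- 'i *: Tm R) * (- 'i *: Tm R) = 1.
Proof.
rewrite -scalerAl -scalerAr scalerA mulrNN -expr2 sqr_i scaleN1r.
by rewrite -mulmxE; mx22_ring.
Qed.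

Lemma mexp_thetam (t : R) :
  mexp (t%:C *: thetam R) = (cos (t / 2))%:C *: 1 + (sin (t / 2))%:C *: Tm R.
Proof.
have mulr_i_Ni (x : C) : 'i * x * - 'i = x by rewrite mulrN mulrAC -expr2 sqr_i mulN1r opprK.
have -> : t%:C *: thetam R = ('i * (t / 2)%:C) *: (- 'i *: Tm R).
  by rewrite thetam_Tm !scalerA mulr_i_Ni rmorphM fmorphV rmorph_nat.
by rewrite (mexp_involution iTm_sqr) coshC_imag sinhC_imag scalerA mulr_i_Ni.
Qed.

Lemma rotation_conj_Jm (y : R) :
  ((cos y)%:C *: 1 + (sin y)%:C *: Tm R) *m Jm R *m ((cos y)%:C *: 1 - (sin y)%:C *: Tm R)
  = (cos (y + y))%:C *: Jm R + (sin (y + y))%:C *: Km R.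
Proof. by rewrite cosD sinD !rmorphB !rmorphD !rmorphM; mx22_ring. Qed.

Lemma Ym_Km : Ym R = 2^-1 *: Km R.
Proof.
rewrite /Ym !mexp_thetam mulNr cosN sinN rmorphN scaleNr Xm_Jm.
rewrite -scalemxAr -scalemxAl rotation_conj_Jm -splitr cos_pihalf sin_pihalf.
by rewrite scale0r add0r scale1r.
Qed.

Lemma oneparam_Xm (a : C) : oneparam (Xm R) a = coshC (a / 2) *: 1 + sinhC (a / 2) *: Jm R.
Proof. by rewrite /oneparam Xm_Jm scalerA (mexp_involution Jm_sqr). Qed.

Lemma oneparam_Ym (b : C) : oneparam (Ym R) b = coshC (b / 2) *: 1 + sinhC (b / 2) *: Km R.
Proof. by rewrite /oneparam Ym_Km scalerA (mexp_involution Km_sqr). Qed.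

Lemma Km_conj (c s p q : C) :
  (c *: 1 + s *: Km R) *m (p *: 1 + q *: Jm R) *m (c *: 1 + (- s) *: Km R) =
  (p * (c ^+ 2 - s ^+ 2)) *: 1 + q *: ((c ^+ 2 + s ^+ 2) *: Jm R + (2 * c * s) *: Tm R).
Proof. by mx22_ring. Qed.

Lemma oneparam_conj (a b : C) :
  oneparam (Ym R) b *m oneparam (Xm R) a *m oneparam (Ym R) (- b) =
  coshC (a / 2) *: 1 + sinhC (a / 2) *: (coshC b *: Jm R + sinhC b *: Tm R).
Proof.
rewrite !oneparam_Ym oneparam_Xm mulNr coshCN sinhCN Km_conj.
by rewrite coshC2_sub_sinhC2 mulr1 coshC_double sinhC_double -splitr.
Qed.

Lemma oneparam_conjB (a b b' : C) :
  oneparam (Ym R) b *m oneparam (Xm R) a *m oneparam (Ym R) (- b)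
  - oneparam (Ym R) b' *m oneparam (Xm R) a *m oneparam (Ym R) (- b') =
  (sinhC (a / 2) * (coshC b - coshC b')) *: Jm R +
  (sinhC (a / 2) * (sinhC b - sinhC b')) *: Tm R.
Proof.
(* The sides carry differently inferred matrix structures: an unrestricted rewrite is very slow. *)
rewrite [X in X - _ = _](oneparam_conj a b) [X in _ - X = _](oneparam_conj a b').
rewrite opprD addrACA subrr add0r -scalerBr opprD addrACA.
by rewrite -!scalerBl scalerDr !scalerA.
Qed.

End OneParameterSubgroups.

Section OperatorNorm.
Variable R : realType.
Local Notation C := (Num.NumField.sort (R[i] : numFieldType)).
Local Notation MC := 'M[R[i]]_2.

Lemma hnorm2E (v : 'cV[R[i]]_2) :
  hnorm v = Num.sqrt (cabs (v ord0 0) ^+ 2 + cabs (v ord_max 0) ^+ 2).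
Proof.
rewrite /hnorm 2!big_ord_recl big_ord0 addr0 (_ : lift ord0 ord0 = ord_max) //.
exact: val_inj.
Qed.

Lemma opnorm_le (M : MC) (B : R) : (forall v, hnorm v = 1 -> hnorm (M *m v) <= B) ->
  opnorm M <= B.
Proof.
move=> MB; rewrite /opnorm; apply: ge_sup => [|_ [v /= v1 <-]]; last exact: MB.
pose e0 : 'cV[R[i]]_2 := \col_i (i == 0)%:R.
exists (hnorm (M *m e0)), e0 => //=.
by rewrite hnorm2E !mxE /= !(expr0n, expr1n, addr0, sqrtr0, sqrtr1).
Qed.

Lemma sqr_swap_sum_le (p q x y : R) : 0 <= p -> 0 <= q -> x ^+ 2 + y ^+ 2 = 1 ->
  (p * x + q * y) ^+ 2 + (q * x + p * y) ^+ 2 <= (p + q) ^+ 2.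
Proof.
move=> p0 q0 xy1; have : 2 * x * y <= 1 by have := sqr_ge0 (x - y); nra.
rewrite -subr_ge0 => /(mulr_ge0 (mulr_ge0 p0 q0)); nra.
Qed.

Lemma mulmx_cV2E (M : MC) (v : 'cV[R[i]]_2) i :
  (M *m v) i 0 = M i ord0 * v ord0 0 + M i ord_max * v ord_max 0.
Proof.
rewrite mxE 2!big_ord_recl big_ord0 addr0 (_ : lift ord0 ord0 = ord_max) //.
exact: val_inj.
Qed.

Lemma opnorm_Jm_Tm (al be : C) : opnorm (al *: Jm R + be *: Tm R) <= cabs al + cabs be.
Proof.
have -> : al *: Jm R + be *: Tm R = mx22 al (- be) be (- al).
  by rewrite /Jm /Tm !mx22_scale mx22_add; congr mx22; ring.
apply: opnorm_le => v; rewrite !hnorm2E => v1.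
set x := cabs (v ord0 0) in v1 *; set y := cabs (v ord_max 0) in v1 *.
have xy1 : x ^+ 2 + y ^+ 2 = 1.
  by rewrite -[LHS]sqr_sqrtr ?v1 ?expr1n // addr_ge0 ?sqr_ge0.
have row_le (p q : C) : cabs (p * v ord0 0 + - q * v ord_max 0) ^+ 2 <=
    (cabs p * x + cabs q * y) ^+ 2.
  rewrite lerXn2r ?nnegrE ?cabs_ge0 ?addr_ge0 ?mulr_ge0 ?cabs_ge0 //.
  by apply: le_trans (cabsD_le _ _) _; rewrite !cabsM cabsN.
rewrite -(ger0_norm (addr_ge0 (cabs_ge0 al) (cabs_ge0 be))) -sqrtr_sqr.
rewrite ler_sqrt ?sqr_ge0 // !mulmx_cV2E !mxE /=.
apply: le_trans (lerD (row_le al be) (row_le be al)) _.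
exact: sqr_swap_sum_le (cabs_ge0 _) (cabs_ge0 _) xy1.
Qed.

End OperatorNorm.

Theorem lemmaA5 (R : realType) (a b b' : R[i]) (A : R) :
  0 < A ->
  cabs (b' - b) <= 1 ->
  cabs a * expR (cabs b) <= A ->
  opnorm (oneparam (Ym R) b *m oneparam (Xm R) a *m oneparam (Ym R) (- b)
          - oneparam (Ym R) b' *m oneparam (Xm R) a *m oneparam (Ym R) (- b'))
  <= 10%:R * expR A * cabs a * expR (cabs b) * cabs (b' - b).
Proof.
move=> _ d_le1 ab_le_A.
rewrite oneparam_conjB; apply: le_trans (opnorm_Jm_Tm _ _) _.
rewrite [cabs (_ * (coshC _ - _))]cabsM [cabs (_ * (sinhC _ - _))]cabsM -mulrDr.
have [ch_le sh_le] := cabs_coshCB_sinhCB b b'.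
set d := cabs (b' - b) in d_le1 ch_le sh_le *; set eb := expR (cabs b) in ab_le_A ch_le sh_le *.
have d_ge0 : 0 <= d by exact: cabs_ge0.
have a_ge0 := cabs_ge0 a.
have eb_ge1 : 1 <= eb by rewrite -expR0 ler_expR cabs_ge0.
have sha_le := cabs_sinhC_le (a / 2); rewrite [cabs (a / 2)]cabs_half in sha_le.
have ea_le : expR (cabs a / 2) <= expR A by rewrite ler_expR; nra.
have ed_le : expR d - 1 <= 4%:R * d by rewrite expR_sub1_le4 ?d_ge0.
apply: (@le_trans _ _ (cabs a / 2 * expR (cabs a / 2) * (2 * (eb * (4%:R * d))))).
  apply: ler_pM => //; rewrite ?cabs_ge0 ?addr_ge0 ?cabs_ge0 //.
  have : eb * (expR d - 1) <= eb * (4%:R * d) by rewrite ler_wpM2l ?(le_trans ler01).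
  lra.
have -> : cabs a / 2 * expR (cabs a / 2) * (2 * (eb * (4%:R * d))) =
  (4%:R * expR (cabs a / 2)) * (cabs a * eb * d) by field.
rewrite [X in _ <= X](_ : _ = (10%:R * expR A) * (cabs a * eb * d)); last by ring.
by rewrite ler_wpM2r ?mulr_ge0 //; have := expR_ge0 A; lra.
Qed.
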